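(* Let $a_1,\dots,a_7$ and $\alpha_1,\dots,\alpha_7$ be positive real numbers with $\sum_{i=1}^7\alpha_i=\pi$. Then $$\sum_{i=1}^7 a_i\cos\alpha_i\;\le\;\cos\frac{\pi}{7}\cdot\frac{1}{a_1a_2\cdots a_7}\,\psi(a_1^2,a_2^2,\dots,a_7^2),$$ where $\psi(x_1,\dots,x_7)=x_1x_2x_3x_4+x_2x_3x_4x_5+x_3x_4x_5x_6+x_4x_5x_6x_7+x_5x_6x_7x_1+x_6x_7x_1x_2+x_7x_1x_2x_3$. *)

From Stdlib Require Export Reals.
Open Scope R_scope.

Definition psi7 (x1 x2 x3 x4 x5 x6 x7 : R) : R :=
  x1*x2*x3*x4 + x2*x3*x4*x5 + x3*x4*x5*x6 + x4*x5*x6*x7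
  + x5*x6*x7*x1 + x6*x7*x1*x2 + x7*x1*x2*x3.

(* Put x_i = sqrt a_i and y_i = x_i x_(i+1) x_(i+2) x_(i+3) / (x_(i+4) x_(i+5) x_(i+6))
   (indices mod 7).  Then psi(a_1^2, ..., a_7^2) / (a_1 ... a_7) = sum y_i^2 and
   y_i y_(i+4) = a_i, so the theorem says
     sum_i y_i y_(i+4) cos(alpha_i) <= cos(pi/7) sum_i y_i^2,
   a weighted cycle inequality along the 7-cycle i -> i+4 with angles summing to pi.
   Writing the weights as planar vectors y_k (cos t_k, sin t_k), where the t_k are
   the partial sums of the angles, the left side becomes a sum of dot products of
   consecutive vectors in which the closing term changes sign (t_8 = t_1 + pi).  Each
   coordinate is then bounded by the largest eigenvalue of the signed 7-cycle, which
   is cos(pi/7).  That last bound is an explicit sum of squares, valid modulo the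
   minimal polynomial 8c^3 - 4c^2 - 4c + 1 of cos(pi/7). *)
From Stdlib Require Import Reals Lra Psatz.
Open Scope R_scope.

(* An LDL^T decomposition of the form, with coefficients reduced modulo the
   minimal polynomial; the last summand is the multiple of that polynomial. *)
Lemma cycle7_form_nonneg (c u0 u1 u2 u3 u4 u5 u6 : R)
  (hpoly : 8*c^3 - 4*c^2 - 4*c + 1 = 0) (hc0 : 0 <= c) (hc1 : c <= 1)
  (hc2 : 1 <= 2*c^2) :
  0 <= c*(u0^2+u1^2+u2^2+u3^2+u4^2+u5^2+u6^2)
       + (u0*u1+u1*u2+u2*u3+u3*u4+u4*u5+u5*u6+u6*u0).
Proof.
  assert (hhalf : 0 <= -1/2 + c) by nra.
  assert (htop : 0 <= 1 + c - 2*c^2) by nra.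
  assert (E : c*(u0^2+u1^2+u2^2+u3^2+u4^2+u5^2+u6^2)
      + (u0*u1+u1*u2+u2*u3+u3*u4+u4*u5+u5*u6+u6*u0) =
    c * (u0 + (2 + 2*c - 4*c^2)*u1 + (2 + 2*c - 4*c^2)*u6)^2
    + (-1 + 2*c^2) * (u1 + (-1 + 2*c)*u2 + (1 + 2*c - 4*c^2)*u6)^2
    + 1/2 * (u2 + u3 + (-1 - 2*c + 4*c^2)*u6)^2
    + (-1/2 + c) * (u3 + (-2 + 4*c^2)*u4 + (-2 - 2*c + 4*c^2)*u6)^2
    + (1 + c - 2*c^2) * (u4 + 2*c*u5 + u6)^2
    + (8*c^3 - 4*c^2 - 4*c + 1) *
      (3/2*u6*u6 + u5*u6 + 2*u4*u6 + u4*u5 + u4*u4 - u3*u6 - u3*u4 - u2*u6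
       + 1/2*u2*u2 + 2*u1*u6 - u1*u2 + u1*u1 + u0*u6 + u0*u1 + 4*c*u6*u6
       + c*u5*u5 + 2*c*u4*u6 - 2*c*u2*u6 - c*u2*u2 + 4*c*u1*u6 + c*u1*u1
       - 2*c^2*u6*u6 - 4*c^2*u4*u6 - 2*c^2*u4*u4 + 4*c^2*u2*u6
       - 4*c^2*u1*u6 - 2*c^2*u1*u1 - 4*c^3*u6*u6)) by field.
  rewrite E, hpoly, Rmult_0_l, Rplus_0_r.
  repeat apply Rplus_le_le_0_compat; apply Rmult_le_pos; try apply pow2_ge_0; lra.
Qed.

Lemma cos_3a_cos (x : R) : cos (3 * x) = 4 * cos x ^ 3 - 3 * cos x.
Proof.
  replace (3 * x) with (2 * x + x) by ring.
  rewrite cos_plus, cos_2a_cos, sin_2a.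
  pose proof (sin2_cos2 x) as hsc; rewrite !Rsqr_pow2 in hsc.
  replace (2 * sin x * cos x * sin x) with (2 * cos x * sin x ^ 2) by ring.
  replace (sin x ^ 2) with (1 - cos x ^ 2) by lra.
  ring.
Qed.

(* From cos(4 pi/7) = - cos(3 pi/7), after discarding the root c = -1. *)
Lemma cos_PI7_minpoly :
  8 * cos (PI/7)^3 - 4 * cos (PI/7)^2 - 4 * cos (PI/7) + 1 = 0.
Proof.
  set (t := PI/7).
  assert (hc : -1 < cos t).
  { rewrite <- cos_PI. apply cos_decreasing_1; unfold t; pose proof PI_RGT_0; lra. }
  assert (h43 : cos (2 * (2 * t)) = - cos (3 * t)).
  { replace (2 * (2 * t)) with (PI - 3 * t) by (unfold t; field).
    apply Rtrigo_facts.cos_pi_minus. }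
  rewrite cos_2a_cos, cos_2a_cos, cos_3a_cos in h43.
  assert (hfac : (cos t + 1) * (8*cos t^3 - 4*cos t^2 - 4*cos t + 1) = 0) by nra.
  destruct (Rmult_integral _ _ hfac) as [h | h]; [lra | exact h].
Qed.

Lemma cos_PI7_bounds : 0 <= cos (PI/7) <= 1 /\ 1 <= 2 * cos (PI/7)^2.
Proof.
  pose proof PI_RGT_0 as hpi.
  assert (hle : cos (PI/4) <= cos (PI/7)) by (left; apply cos_decreasing_1; lra).
  assert (hs2 : sqrt 2 ^ 2 = 2) by (apply pow2_sqrt; lra).
  assert (hs2pos : 0 < sqrt 2) by (apply sqrt_lt_R0; lra).
  rewrite cos_PI4 in hle.
  assert (hinv : 1 <= sqrt 2 * cos (PI/7)).
  { replace 1 with (sqrt 2 * (1 / sqrt 2)) by (field; lra).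
    apply Rmult_le_compat_l; lra. }
  pose proof (COS_bound (PI/7)).
  split; [split|]; nra.
Qed.

Lemma signed_cycle7_form_le (p1 p2 p3 p4 p5 p6 p7 : R) :
  p1*p2 + p2*p3 + p3*p4 + p4*p5 + p5*p6 + p6*p7 - p7*p1
  <= cos (PI/7) * (p1^2 + p2^2 + p3^2 + p4^2 + p5^2 + p6^2 + p7^2).
Proof.
  destruct cos_PI7_bounds as [[hc0 hc1] hc2].
  pose proof (cycle7_form_nonneg (cos (PI/7)) (-p1) p2 (-p3) p4 (-p5) p6 (-p7)
                cos_PI7_minpoly hc0 hc1 hc2) as h.
  lra.
Qed.

Lemma cos_as_dot (s b : R) : cos b = cos s * cos (s + b) + sin s * sin (s + b).
Proof. rewrite <- cos_minus, <- cos_neg. f_equal. ring. Qed.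

Lemma sqr_split_cos_sin (z t : R) : z^2 = (z * cos t)^2 + (z * sin t)^2.
Proof.
  pose proof (sin2_cos2 t) as hsc; rewrite !Rsqr_pow2 in hsc.
  replace (z^2) with (z^2 * (sin t ^ 2 + cos t ^ 2)) by (rewrite hsc; ring).
  ring.
Qed.

Lemma cycle7_cos_form_le (z1 z2 z3 z4 z5 z6 z7 b1 b2 b3 b4 b5 b6 b7 : R)
  (hsum : b1 + b2 + b3 + b4 + b5 + b6 + b7 = PI) :
  z1*z2*cos b1 + z2*z3*cos b2 + z3*z4*cos b3 + z4*z5*cos b4
  + z5*z6*cos b5 + z6*z7*cos b6 + z7*z1*cos b7
  <= cos (PI/7) * (z1^2 + z2^2 + z3^2 + z4^2 + z5^2 + z6^2 + z7^2).
Proof.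
  set (t3 := b1 + b2). set (t4 := t3 + b3).
  set (t5 := t4 + b4). set (t6 := t5 + b5). set (t7 := t6 + b6).
  assert (e7 : cos b7 = - cos t7).
  { replace b7 with (PI - t7) by (unfold t7, t6, t5, t4, t3; lra).
    apply Rtrigo_facts.cos_pi_minus. }
  rewrite (cos_as_dot b1 b2), (cos_as_dot t3 b3), (cos_as_dot t4 b4),
    (cos_as_dot t5 b5), (cos_as_dot t6 b6), e7.
  fold t3 t4 t5 t6 t7.
  rewrite (sqr_split_cos_sin z2 b1), (sqr_split_cos_sin z3 t3),
    (sqr_split_cos_sin z4 t4), (sqr_split_cos_sin z5 t5),
    (sqr_split_cos_sin z6 t6), (sqr_split_cos_sin z7 t7).
  pose proof (signed_cycle7_form_le z1 (z2*cos b1) (z3*cos t3) (z4*cos t4)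
                (z5*cos t5) (z6*cos t6) (z7*cos t7)) as hcos.
  pose proof (signed_cycle7_form_le 0 (z2*sin b1) (z3*sin t3) (z4*sin t4)
                (z5*sin t5) (z6*sin t6) (z7*sin t7)) as hsin.
  lra.
Qed.

Lemma cycle7_cos_le_psi7_sqr (x1 x2 x3 x4 x5 x6 x7 al1 al2 al3 al4 al5 al6 al7 : R)
  (h1 : 0 < x1) (h2 : 0 < x2) (h3 : 0 < x3) (h4 : 0 < x4)
  (h5 : 0 < x5) (h6 : 0 < x6) (h7 : 0 < x7)
  (hsum : al1 + al2 + al3 + al4 + al5 + al6 + al7 = PI) :
  x1^2 * cos al1 + x2^2 * cos al2 + x3^2 * cos al3 + x4^2 * cos al4
  + x5^2 * cos al5 + x6^2 * cos al6 + x7^2 * cos al7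
  <= cos (PI / 7) * (1 / (x1^2 * x2^2 * x3^2 * x4^2 * x5^2 * x6^2 * x7^2))
     * psi7 ((x1^2)^2) ((x2^2)^2) ((x3^2)^2) ((x4^2)^2)
            ((x5^2)^2) ((x6^2)^2) ((x7^2)^2).
Proof.
  set (y1 := x1*x2*x3*x4/(x5*x6*x7)). set (y2 := x2*x3*x4*x5/(x6*x7*x1)).
  set (y3 := x3*x4*x5*x6/(x7*x1*x2)). set (y4 := x4*x5*x6*x7/(x1*x2*x3)).
  set (y5 := x5*x6*x7*x1/(x2*x3*x4)). set (y6 := x6*x7*x1*x2/(x3*x4*x5)).
  set (y7 := x7*x1*x2*x3/(x4*x5*x6)).
  assert (hpsi : 1 / (x1^2 * x2^2 * x3^2 * x4^2 * x5^2 * x6^2 * x7^2)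
      * psi7 ((x1^2)^2) ((x2^2)^2) ((x3^2)^2) ((x4^2)^2)
             ((x5^2)^2) ((x6^2)^2) ((x7^2)^2)
      = y1^2 + y5^2 + y2^2 + y6^2 + y3^2 + y7^2 + y4^2).
  { unfold y1, y2, y3, y4, y5, y6, y7, psi7. field. repeat split; lra. }
  assert (hprod : y1*y5 = x1^2 /\ y5*y2 = x5^2 /\ y2*y6 = x2^2 /\ y6*y3 = x6^2
      /\ y3*y7 = x3^2 /\ y7*y4 = x7^2 /\ y4*y1 = x4^2).
  { unfold y1, y2, y3, y4, y5, y6, y7.
    repeat split; field; repeat split; lra. }
  destruct hprod as (e1 & e5 & e2 & e6 & e3 & e7 & e4).
  rewrite Rmult_assoc, hpsi, <- e1, <- e2, <- e3, <- e4, <- e5, <- e6, <- e7.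
  pose proof (cycle7_cos_form_le y1 y5 y2 y6 y3 y7 y4
                al1 al5 al2 al6 al3 al7 al4 ltac:(lra)).
  lra.
Qed.

Theorem theorem3 (a1 a2 a3 a4 a5 a6 a7 al1 al2 al3 al4 al5 al6 al7 : R)
  (ha1 : 0 < a1) (ha2 : 0 < a2) (ha3 : 0 < a3) (ha4 : 0 < a4)
  (ha5 : 0 < a5) (ha6 : 0 < a6) (ha7 : 0 < a7)
  (hl1 : 0 < al1) (hl2 : 0 < al2) (hl3 : 0 < al3) (hl4 : 0 < al4)
  (hl5 : 0 < al5) (hl6 : 0 < al6) (hl7 : 0 < al7)
  (hsum : al1 + al2 + al3 + al4 + al5 + al6 + al7 = PI) :
  a1 * cos al1 + a2 * cos al2 + a3 * cos al3 + a4 * cos al4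
  + a5 * cos al5 + a6 * cos al6 + a7 * cos al7
  <= cos (PI / 7) * (1 / (a1 * a2 * a3 * a4 * a5 * a6 * a7))
     * psi7 (a1^2) (a2^2) (a3^2) (a4^2) (a5^2) (a6^2) (a7^2).
Proof.
  rewrite <- (pow2_sqrt a1), <- (pow2_sqrt a2), <- (pow2_sqrt a3),
    <- (pow2_sqrt a4), <- (pow2_sqrt a5), <- (pow2_sqrt a6), <- (pow2_sqrt a7)
    by lra.
  apply cycle7_cos_le_psi7_sqr; try apply sqrt_lt_R0; assumption.
Qed.
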